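(* For every type $t$, if $u:\mathbb{N}\to[\![t]\!]$ and $u':\mathbb{N}\to[\![t]\!]_s$ are ascending chains with $\mathsf{sim}\,t\,u_i\,u'_i$ for all $i$, then $\mathsf{sim}\,t\,(\bigsqcup_i u_i)\,(\bigsqcup_i u'_i)$.
   Context: Fix sets $\mathsf{Principals}$, $\mathsf{Privileges}$ and $\mathcal{A}:\mathsf{Principals}\to\mathcal{P}(\mathsf{Privileges})$. Types $t::=\mathtt{bool}\mid t_1\to t_2$. $\bot,\star$ are two distinct values, neither booleans nor functions. For a cpo $C$, $C_{\bot\star}=C\cup\{\bot,\star\}$ with $u\le v$ iff $u=\bot$ or $u=v$ or $u,v\in C$, $u\le v$. Eager domains: $[\![\mathtt{bool}]\!]=\{\mathsf{true},\mathsf{false}\}$, $\mathcal{P}(\mathsf{Privileges})$ ordered by equality, $[\![t_1\to t_2]\!]=\mathcal{P}(\mathsf{Privileges})\to[\![t_1]\!]\to[\![t_2]\!]_{\bot\star}$ (continuous, pointwise order, lubs pointwise). Stacks: $\mathsf{Stacks}$ = nonempty lists of pairs $\langle n,P\rangle\in\mathsf{Principals}\times\mathcal{P}(\mathsf{Privileges})$, ordered by equality; $\mathsf{check}(p,\mathrm{nil})$ false, $\mathsf{check}(p,\langle n,P\rangle::S)$ iff $p\in\mathcal{A}(n)\wedge(p\in P\vee\mathsf{check}(p,S))$; $\mathsf{privs}(S)=\{p:\mathsf{check}(p,S)\}$. Stack domains: $[\![\mathtt{bool}]\!]_s=\{\mathsf{true},\mathsf{false}\}$, $[\![t_1\to t_2]\!]_s=\mathsf{Stacks}\to[\![t_1]\!]_s\to([\![t_2]\!]_s)_{\bot\star}$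 (continuous, pointwise, lubs pointwise). Relation $\mathsf{sim}\,t\subseteq[\![t]\!]_{\bot\star}\times([\![t]\!]_s)_{\bot\star}$: $\mathsf{sim}\,t\,d\,d'$ is true if $d=d'\in\{\bot,\star\}$, false if $d\ne d'$ and one of them is in $\{\bot,\star\}$; otherwise $\mathsf{sim}\,\mathtt{bool}\,b\,b'$ iff $b=b'$, and $\mathsf{sim}(t_1\to t_2)\,f\,f'$ iff for all $S\in\mathsf{Stacks}$, $d\in[\![t_1]\!]$, $d'\in[\![t_1]\!]_s$: $\mathsf{sim}\,t_1\,d\,d'$ implies $\mathsf{sim}\,t_2\,(f(\mathsf{privs}\,S)d)\,(f'Sd')$. *)

From Stdlib Require Import List.
Import ListNotations.

Inductive ty : Type :=
| TBool : ty
| TArr : ty -> ty -> ty.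

Record poset : Type := Poset { car : Type; le : car -> car -> Prop }.

Inductive lifted (X : Type) : Type :=
| Bot : lifted X
| Star : lifted X
| Val : X -> lifted X.
Arguments Bot {X}.
Arguments Star {X}.
Arguments Val {X} _.

Definition lift_le {X : Type} (leX : X -> X -> Prop) (u v : lifted X) : Prop :=
  u = Bot \/ u = v \/ (exists x y, u = Val x /\ v = Val y /\ leX x y).

Definition ascending {X : Type} (leX : X -> X -> Prop) (c : nat -> X) : Prop :=
  forall n, leX (c n) (c (S n)).

Definition is_lub {X : Type} (leX : X -> X -> Prop) (c : nat -> X) (l : X) : Prop :=
  (forall n, leX (c n) l) /\ (forall m, (forall n, leX (c n) m) -> leX l m).

Definition continuous {X Y : Type} (leX : X -> X -> Prop) (leY : Y -> Y -> Prop)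
  (f : X -> Y) : Prop :=
  (forall x y, leX x y -> leY (f x) (f y)) /\
  (forall c l, ascending leX c -> is_lub leX c l -> is_lub leY (fun n => f (c n)) (f l)).

(* P(Privileges) is represented by predicates
   Privileges -> Prop, ordered by equality (so continuity in that argument
   is automatic). *)
Fixpoint den (Privileges : Type) (t : ty) : poset :=
  match t with
  | TBool => Poset bool (@eq bool)
  | TArr t1 t2 =>
      Poset
        { f : (Privileges -> Prop) -> car (den Privileges t1) ->
              lifted (car (den Privileges t2))
        | forall P, continuous (le (den Privileges t1))
                               (lift_le (le (den Privileges t2))) (f P) }
        (fun f g => forall P x,
             lift_le (le (den Privileges t2)) (proj1_sig f P x) (proj1_sig g P x))
  end.

Definition Stacks (Principals Privileges : Type) : Type :=
  { S : list (Principals * (Privileges -> Prop)) | S <> [] }.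

Fixpoint check_list {Principals Privileges : Type}
  (A : Principals -> Privileges -> Prop) (p : Privileges)
  (S : list (Principals * (Privileges -> Prop))) : Prop :=
  match S with
  | [] => False
  | (n, P) :: S' => A n p /\ (P p \/ check_list A p S')
  end.

Definition check {Principals Privileges : Type}
  (A : Principals -> Privileges -> Prop) (p : Privileges)
  (S : Stacks Principals Privileges) : Prop :=
  check_list A p (proj1_sig S).

Definition privs {Principals Privileges : Type}
  (A : Principals -> Privileges -> Prop) (S : Stacks Principals Privileges)
  : Privileges -> Prop :=
  fun p => check A p S.

Fixpoint dens (Principals Privileges : Type) (t : ty) : poset :=
  match t with
  | TBool => Poset bool (@eq bool)
  | TArr t1 t2 =>
      Poset
        { f : Stacks Principals Privileges -> car (dens Principals Privileges t1) ->
              lifted (car (dens Principals Privileges t2))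
        | forall S, continuous (le (dens Principals Privileges t1))
                               (lift_le (le (dens Principals Privileges t2))) (f S) }
        (fun f g => forall S x,
             lift_le (le (dens Principals Privileges t2))
                     (proj1_sig f S x) (proj1_sig g S x))
  end.

Fixpoint sim {Principals Privileges : Type} (A : Principals -> Privileges -> Prop)
  (t : ty) {struct t} :
  lifted (car (den Privileges t)) -> lifted (car (dens Principals Privileges t)) -> Prop :=
  match t return lifted (car (den Privileges t)) ->
                  lifted (car (dens Principals Privileges t)) -> Prop with
  | TBool => fun d d' =>
      match d, d' with
      | Bot, Bot => True
      | Star, Star => True
      | Val b, Val b' => b = b'
      | _, _ => False
      end
  | TArr t1 t2 => fun d d' =>
      match d, d' with
      | Bot, Bot => True
      | Star, Star => True
      | Val f, Val f' =>
          forall (S : Stacks Principals Privileges)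
                 (x : car (den Privileges t1))
                 (x' : car (dens Principals Privileges t1)),
            sim A t1 (Val x) (Val x') ->
            sim A t2 (proj1_sig f (privs A S) x) (proj1_sig f' S x')
      | _, _ => False
      end
  end.

(* In a function domain lubs of chains are computed
   pointwise (this needs the result domain to be chain complete, which is
   proved alongside), so for the arrow case it suffices to show that sim is
   closed under lubs of chains in lifted domains.  A chain in C_{bot star} is
   either constantly bot, or reaches star and stays there, or from some index
   on is a chain of values of C.  Since sim relates bot only to bot and star
   only to star, two related chains fall into the same case at the same index,
   and in the value case the induction hypothesis applies to the tails. *)

From Stdlib Require Import Arith Lia Relation_Definitions Classical ClassicalEpsilon.

Definition chain_complete {X : Type} (leX : X -> X -> Prop) : Prop :=
  forall c, ascending leX c -> exists l, is_lub leX c l.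

Definition omega_complete_preorder {X : Type} (leX : X -> X -> Prop) : Prop :=
  reflexive X leX /\ transitive X leX /\ chain_complete leX.

Lemma ascending_mono {X : Type} (leX : X -> X -> Prop) (c : nat -> X) :
  reflexive X leX -> transitive X leX -> ascending leX c ->
  forall n m, n <= m -> leX (c n) (c m).
Proof.
  intros Hrefl Htrans Hc n m Hnm. induction Hnm as [|m _ IH].
  - apply Hrefl.
  - exact (Htrans _ _ _ IH (Hc m)).
Qed.

Lemma ascending_eq_const {X : Type} (c : nat -> X) :
  ascending eq c -> forall n, c n = c 0.
Proof. intros Hc n. induction n as [|n IH]; [reflexivity|]. rewrite <- IH. symmetry; apply Hc. Qed.

Lemma eq_omega_complete_preorder (X : Type) : omega_complete_preorder (@eq X).
Proof.
  split; [|split].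
  - intros x; reflexivity.
  - intros x y z; apply eq_trans.
  - intros c Hc. exists (c 0). split.
    + exact (ascending_eq_const c Hc).
    + intros m Hm. apply Hm.
Qed.

Lemma lifted_cases {X : Type} (c : nat -> lifted X) :
  (exists i, c i = Star) \/ (exists i a, c i = Val a) \/ (forall n, c n = Bot).
Proof.
  destruct (classic (exists i, c i = Star)) as [HStar|HnoStar]; [now left|right].
  destruct (classic (exists i a, c i = Val a)) as [HVal|HnoVal]; [now left|right].
  intros n. destruct (c n) as [| |a] eqn:E; [reflexivity|exfalso; eauto|exfalso; eauto].
Qed.

Section Lifting.

Context {X : Type} (leX : X -> X -> Prop).
Hypothesis leX_refl : reflexive X leX.
Hypothesis leX_trans : transitive X leX.

Lemma lift_le_refl : reflexive (lifted X) (lift_le leX).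
Proof. intros u. right; left; reflexivity. Qed.

Lemma lift_le_trans : transitive (lifted X) (lift_le leX).
Proof.
  intros u v w [->|[->|(a & b & -> & -> & Hab)]] Hvw; [now left|exact Hvw|].
  destruct Hvw as [Hvw|[<-|(b' & c & Hb & -> & Hbc)]]; [discriminate| |].
  - right; right; eauto.
  - injection Hb as <-. right; right. exists a, c. repeat split. exact (leX_trans _ _ _ Hab Hbc).
Qed.

Lemma lift_le_Bot_inv u : lift_le leX u Bot -> u = Bot.
Proof. intros [Hu|[Hu|(a & b & _ & Hb & _)]]; [exact Hu|exact Hu|discriminate]. Qed.

Lemma lift_Star_le_inv u : lift_le leX Star u -> u = Star.
Proof. intros [Hu|[Hu|(a & b & Ha & _ & _)]]; [discriminate|now symmetry|discriminate]. Qed.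

Lemma lift_Val_le_inv a u : lift_le leX (Val a) u -> exists b, u = Val b /\ leX a b.
Proof.
  intros [Hu|[<-|(a' & b & Ha & -> & Hab)]]; [discriminate|eauto|].
  injection Ha as <-. eauto.
Qed.

Lemma lift_le_Val_Val a b : lift_le leX (Val a) (Val b) -> leX a b.
Proof.
  intros Hab. destruct (lift_Val_le_inv _ _ Hab) as (b' & Eb & Hb). now injection Eb as ->.
Qed.

Lemma ascending_Val_tail c i a : ascending (lift_le leX) c -> c i = Val a ->
  exists d, ascending leX d /\ forall n, c (n + i) = Val (d n).
Proof.
  intros Hc Hi.
  assert (Hval : forall n, exists b, c (n + i) = Val b).
  { induction n as [|n [b Hb]]; [eauto|].
    destruct (lift_Val_le_inv b (c (S n + i))) as (b' & Hb' & _); [|eauto].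
    rewrite <- Hb. apply Hc. }
  set (d n := match c (n + i) with Val b => b | _ => a end).
  assert (Hd : forall n, c (n + i) = Val (d n)).
  { intros n. destruct (Hval n) as [b Hb]. unfold d. now rewrite Hb. }
  exists d. split; [|exact Hd].
  intros n. apply lift_le_Val_Val. rewrite <- !Hd. apply (Hc (n + i)).
Qed.

Section ValueTail.

Variables (c : nat -> lifted X) (i : nat) (d : nat -> X).
Hypothesis c_ascending : ascending (lift_le leX) c.
Hypothesis c_tail : forall n, c (n + i) = Val (d n).

Lemma lift_upper_bound_of_tail m : (forall n, leX (d n) m) -> forall k, lift_le leX (c k) (Val m).
Proof.
  intros Hm k. destruct (le_lt_dec i k) as [Hik|Hki].
  - replace k with ((k - i) + i) by lia. rewrite c_tail. right; right; eauto.
  - apply lift_le_trans with (c i).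
    + apply ascending_mono; [exact lift_le_refl|exact lift_le_trans|exact c_ascending|lia].
    + change i with (0 + i). rewrite c_tail. right; right; eauto.
Qed.

Lemma is_lub_Val_tail y : is_lub leX d y -> is_lub (lift_le leX) c (Val y).
Proof.
  intros [Hub Hleast]. split; [exact (lift_upper_bound_of_tail y Hub)|].
  intros m Hm. pose proof (Hm i) as Hi. change i with (0 + i) in Hi. rewrite c_tail in Hi.
  destruct (lift_Val_le_inv _ _ Hi) as (b & -> & _).
  right; right. exists y, b. repeat split. apply Hleast.
  intros n. apply lift_le_Val_Val. rewrite <- c_tail. apply Hm.
Qed.

Lemma is_lub_Val_tail_inv l : is_lub (lift_le leX) c l -> exists y, l = Val y /\ is_lub leX d y.
Proof.
  intros [Hub Hleast]. pose proof (Hub i) as Hi. change i with (0 + i) in Hi. rewrite c_tail in Hi.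
  destruct (lift_Val_le_inv _ _ Hi) as (y & -> & _). exists y. repeat split.
  - intros n. apply lift_le_Val_Val. rewrite <- c_tail. apply Hub.
  - intros m Hm. apply lift_le_Val_Val, Hleast, lift_upper_bound_of_tail, Hm.
Qed.

End ValueTail.

Lemma is_lub_Star c i : ascending (lift_le leX) c -> c i = Star -> is_lub (lift_le leX) c Star.
Proof.
  intros Hc Hi. split.
  - intros n. destruct (le_lt_dec i n) as [Hin|Hni].
    + assert (Hcn : lift_le leX (c i) (c n))
        by (apply ascending_mono; [exact lift_le_refl|exact lift_le_trans|exact Hc|exact Hin]).
      rewrite Hi in Hcn. rewrite (lift_Star_le_inv _ Hcn). apply lift_le_refl.
    + rewrite <- Hi. apply ascending_mono; [exact lift_le_refl|exact lift_le_trans|exact Hc|lia].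
  - intros m Hm. specialize (Hm i). rewrite Hi in Hm.
    rewrite (lift_Star_le_inv _ Hm). apply lift_le_refl.
Qed.

Lemma is_lub_Star_inv c i l : c i = Star -> is_lub (lift_le leX) c l -> l = Star.
Proof.
  intros Hi [Hub _]. specialize (Hub i). rewrite Hi in Hub. exact (lift_Star_le_inv _ Hub).
Qed.

Lemma is_lub_Bot c : (forall n, c n = Bot) -> is_lub (lift_le leX) c Bot.
Proof. intros Hc. split; [intros n; rewrite Hc; apply lift_le_refl|intros m _; now left]. Qed.

Lemma is_lub_Bot_inv c l : (forall n, c n = Bot) -> is_lub (lift_le leX) c l -> l = Bot.
Proof. intros Hc [_ Hleast]. apply lift_le_Bot_inv, Hleast. intros n. rewrite Hc. now left. Qed.

Lemma lift_chain_complete : chain_complete leX -> chain_complete (lift_le leX).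
Proof.
  intros Hcomplete c Hc.
  destruct (lifted_cases c) as [[i Hi]|[(i & a & Hi)|HBot]].
  - exists Star. exact (is_lub_Star c i Hc Hi).
  - destruct (ascending_Val_tail c i a Hc Hi) as (d & Hd & Htail).
    destruct (Hcomplete d Hd) as [y Hy].
    exists (Val y). exact (is_lub_Val_tail c i d Hc Htail y Hy).
  - exists Bot. exact (is_lub_Bot c HBot).
Qed.

End Lifting.

Section ContinuousFunctions.

Context {I Y Z : Type} (leY : Y -> Y -> Prop) (leZ : Z -> Z -> Prop).

Definition cont_fun : Type :=
  { f : I -> Y -> lifted Z | forall i, continuous leY (lift_le leZ) (f i) }.

Definition cont_fun_le (f g : cont_fun) : Prop :=
  forall i y, lift_le leZ (proj1_sig f i y) (proj1_sig g i y).

Lemma continuous_pointwise_lub {W : Type} (leW : W -> W -> Prop)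
    (c : nat -> Y -> W) (g : Y -> W) :
  transitive W leW -> (forall n, continuous leY leW (c n)) ->
  (forall y, is_lub leW (fun n => c n y) (g y)) -> continuous leY leW g.
Proof.
  intros Htrans Hc Hg.
  assert (Hmono : forall x y, leY x y -> leW (g x) (g y)).
  { intros x y Hxy. apply (proj2 (Hg x)). intros n.
    apply Htrans with (c n y); [exact (proj1 (Hc n) x y Hxy)|exact (proj1 (Hg y) n)]. }
  split; [exact Hmono|]. intros e l He Hl. split.
  - intros k. apply Hmono, (proj1 Hl).
  - intros m Hm. apply (proj2 (Hg l)). intros n.
    apply (proj2 (proj2 (Hc n) e l He Hl)). intros k.
    apply Htrans with (g (e k)); [exact (proj1 (Hg (e k)) n)|exact (Hm k)].
Qed.

Hypothesis leZ_refl : reflexive Z leZ.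
Hypothesis leZ_trans : transitive Z leZ.
Hypothesis leZ_complete : chain_complete leZ.

Lemma pointwise_lub_exists (c : nat -> cont_fun) : ascending cont_fun_le c ->
  exists g : cont_fun, forall i y,
    is_lub (lift_le leZ) (fun n => proj1_sig (c n) i y) (proj1_sig g i y).
Proof.
  intros Hc.
  assert (Hex : forall i y, exists l, is_lub (lift_le leZ) (fun n => proj1_sig (c n) i y) l).
  { intros i y. apply lift_chain_complete; [exact leZ_refl|exact leZ_trans|exact leZ_complete|].
    intros n. apply Hc. }
  set (g i y := proj1_sig (constructive_indefinite_description _ (Hex i y))).
  assert (Hg : forall i y, is_lub (lift_le leZ) (fun n => proj1_sig (c n) i y) (g i y))
    by (intros i y; exact (proj2_sig (constructive_indefinite_description _ (Hex i y)))).
  assert (Hcont : forall i, continuous leY (lift_le leZ) (g i)).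
  { intros i. apply continuous_pointwise_lub with (fun n => proj1_sig (c n) i).
    - exact (lift_le_trans leZ leZ_trans).
    - intros n. exact (proj2_sig (c n) i).
    - exact (Hg i). }
  exists (exist _ g Hcont). exact Hg.
Qed.

Lemma is_lub_cont_fun_pointwise (c : nat -> cont_fun) h :
  ascending cont_fun_le c -> is_lub cont_fun_le c h ->
  forall i y, is_lub (lift_le leZ) (fun n => proj1_sig (c n) i y) (proj1_sig h i y).
Proof.
  intros Hc [Hub Hleast] i y.
  destruct (pointwise_lub_exists c Hc) as [g Hg].
  split; [intros n; apply Hub|]. intros m Hm.
  apply (lift_le_trans leZ leZ_trans) with (proj1_sig g i y); [|exact (proj2 (Hg i y) m Hm)].
  apply Hleast. intros n i' y'. exact (proj1 (Hg i' y') n).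
Qed.

Lemma cont_fun_omega_complete_preorder : omega_complete_preorder cont_fun_le.
Proof.
  split; [|split].
  - intros f i y. apply lift_le_refl.
  - intros f g h Hfg Hgh i y. exact (lift_le_trans leZ leZ_trans _ _ _ (Hfg i y) (Hgh i y)).
  - intros c Hc. destruct (pointwise_lub_exists c Hc) as [g Hg].
    exists g. split.
    + intros n i y. exact (proj1 (Hg i y) n).
    + intros m Hm i y. apply (proj2 (Hg i y)). intros n. apply Hm.
Qed.

End ContinuousFunctions.

Lemma den_omega_complete_preorder Pv t : omega_complete_preorder (le (den Pv t)).
Proof.
  induction t as [|t1 _ t2 (Hrefl & Htrans & Hcomplete)].
  - apply eq_omega_complete_preorder.
  - exact (cont_fun_omega_complete_preorder (le (den Pv t1)) _ Hrefl Htrans Hcomplete).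
Qed.

Lemma dens_omega_complete_preorder Pc Pv t : omega_complete_preorder (le (dens Pc Pv t)).
Proof.
  induction t as [|t1 _ t2 (Hrefl & Htrans & Hcomplete)].
  - apply eq_omega_complete_preorder.
  - exact (cont_fun_omega_complete_preorder (le (dens Pc Pv t1)) _ Hrefl Htrans Hcomplete).
Qed.

Section LiftedRelation.

Context {X X' : Type} (leX : X -> X -> Prop) (leX' : X' -> X' -> Prop).
Hypothesis leX_refl : reflexive X leX.
Hypothesis leX_trans : transitive X leX.
Hypothesis leX'_refl : reflexive X' leX'.
Hypothesis leX'_trans : transitive X' leX'.

Variable R : lifted X -> lifted X' -> Prop.
Hypothesis R_Bot : R Bot Bot.
Hypothesis R_Star : R Star Star.
Hypothesis R_shape : forall a a', R a a' -> (a = Bot <-> a' = Bot) /\ (a = Star <-> a' = Star).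
Hypothesis R_Val_lub : forall d d' y y', ascending leX d -> ascending leX' d' ->
  (forall n, R (Val (d n)) (Val (d' n))) -> is_lub leX d y -> is_lub leX' d' y' ->
  R (Val y) (Val y').

Lemma lifted_relation_lub c c' l l' :
  ascending (lift_le leX) c -> ascending (lift_le leX') c' -> (forall n, R (c n) (c' n)) ->
  is_lub (lift_le leX) c l -> is_lub (lift_le leX') c' l' -> R l l'.
Proof.
  intros Hc Hc' HR Hl Hl'.
  destruct (lifted_cases c) as [[i Hi]|[(i & a & Hi)|HBot]].
  - assert (Hi' : c' i = Star) by exact (proj1 (proj2 (R_shape _ _ (HR i))) Hi).
    rewrite (is_lub_Star_inv leX c i l Hi Hl), (is_lub_Star_inv leX' c' i l' Hi' Hl').
    exact R_Star.
  - assert (Hi' : exists a', c' i = Val a').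
    { pose proof (R_shape _ _ (HR i)) as [HB HS]. rewrite Hi in HB, HS.
      destruct (c' i) as [| |a'].
      - discriminate (proj2 HB eq_refl).
      - discriminate (proj2 HS eq_refl).
      - eauto. }
    destruct Hi' as [a' Hi'].
    destruct (ascending_Val_tail leX leX_refl c i a Hc Hi) as (d & Hd & Htail).
    destruct (ascending_Val_tail leX' leX'_refl c' i a' Hc' Hi') as (d' & Hd' & Htail').
    destruct (is_lub_Val_tail_inv leX leX_refl leX_trans c i d Hc Htail l Hl) as (y & -> & Hy).
    destruct (is_lub_Val_tail_inv leX' leX'_refl leX'_trans c' i d' Hc' Htail' l' Hl')
      as (y' & -> & Hy').
    apply R_Val_lub with d d'; [exact Hd|exact Hd'| |exact Hy|exact Hy'].
    intros n. rewrite <- Htail, <- Htail'. apply HR.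
  - assert (HBot' : forall n, c' n = Bot)
      by (intros n; exact (proj1 (proj1 (R_shape _ _ (HR n))) (HBot n))).
    rewrite (is_lub_Bot_inv leX c l HBot Hl), (is_lub_Bot_inv leX' c' l' HBot' Hl').
    exact R_Bot.
Qed.

End LiftedRelation.

Lemma sim_Bot {Pc Pv} (A : Pc -> Pv -> Prop) t : sim A t Bot Bot.
Proof. destruct t; exact I. Qed.

Lemma sim_Star {Pc Pv} (A : Pc -> Pv -> Prop) t : sim A t Star Star.
Proof. destruct t; exact I. Qed.

Lemma sim_shape {Pc Pv} (A : Pc -> Pv -> Prop) t a a' :
  sim A t a a' -> (a = Bot <-> a' = Bot) /\ (a = Star <-> a' = Star).
Proof. destruct t, a, a'; simpl; intros H; try contradiction; split; split; congruence. Qed.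

Theorem lemma6 (Principals Privileges : Type) (A : Principals -> Privileges -> Prop)
  (t : ty)
  (u : nat -> car (den Privileges t))
  (u' : nat -> car (dens Principals Privileges t))
  (lu : car (den Privileges t))
  (lu' : car (dens Principals Privileges t)) :
  ascending (le (den Privileges t)) u ->
  ascending (le (dens Principals Privileges t)) u' ->
  (forall i, sim A t (Val (u i)) (Val (u' i))) ->
  is_lub (le (den Privileges t)) u lu ->
  is_lub (le (dens Principals Privileges t)) u' lu' ->
  sim A t (Val lu) (Val lu').
Proof.
  revert u u' lu lu'.
  induction t as [|t1 _ t2 IH2]; intros u u' lu lu' Hu Hu' Hsim Hlub Hlub'.
  - simpl in *. rewrite <- (proj1 Hlub 0), <- (proj1 Hlub' 0). apply Hsim.
  - intros S x x' Hx.
    destruct (den_omega_complete_preorder Privileges t2) as (Hrefl & Htrans & Hcomplete).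
    destruct (dens_omega_complete_preorder Principals Privileges t2)
      as (Hrefl' & Htrans' & Hcomplete').
    apply (lifted_relation_lub _ _ Hrefl Htrans Hrefl' Htrans' (sim A t2)
             (sim_Bot A t2) (sim_Star A t2) (sim_shape A t2) IH2)
      with (fun n => proj1_sig (u n) (privs A S) x) (fun n => proj1_sig (u' n) S x').
    + intros n. apply Hu.
    + intros n. apply Hu'.
    + intros n. exact (Hsim n S x x' Hx).
    + exact (is_lub_cont_fun_pointwise _ _ Hrefl Htrans Hcomplete u lu Hu Hlub (privs A S) x).
    + exact (is_lub_cont_fun_pointwise _ _ Hrefl' Htrans' Hcomplete' u' lu' Hu' Hlub' S x').
Qed.
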